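(* For every multi-type resource allocation problem and every profile $R$ of strict linear orders over bundles, $\mathrm{MPS}(R)$ is sd-envy-free.
   Context: Setting: $N=\{1,\dots,n\}$ agents; $M=D_1\cup\dots\cup D_p$ items with pairwise disjoint types, $|D_i|=n$, unit supply; bundles $\mathcal D=D_1\times\dots\times D_p$; strict linear orders $\succ_j$ on $\mathcal D$. An assignment is an $n\times|\mathcal D|$ matrix $(p_{j,x})$ with entries in $[0,1]$, rows summing to $1$, and $\sum_j\sum_{x\ni o}p_{j,x}=1$ for each item $o$; row $P_j$ is agent $j$'s allocation. $U(\succ,x)=\{y:y\succ x\}\cup\{x\}$; $p$ weakly stochastically dominates $q$ w.r.t. $\succ$ if $\sum_{y\in U(\succ,x)}p_y\ge\sum_{y\in U(\succ,x)}q_y$ for all $x$. $P$ is sd-envy-free if for all agents $j,k$, $P_j$ weakly stochastically dominates $P_k$ w.r.t. $\succ_j$. MPS: items start with supply $1$; a bundle is available if all its items have positive remaining supply. Continuously in time each agent eats her most preferred available bundle at rate $1$ (each item in the bundle is consumed at rate $1$ and $p_{j,x}$ grows at rate $1$); exhausted items make all bundles containing them unavailable; the process runs until all items are exhausted; the accumulated matrix is $\mathrm{MPS}(R)$. *)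

From HB Require Import structures.
From mathcomp Require Import all_boot all_order all_algebra.
Set Implicit Arguments. Unset Strict Implicit. Unset Printing Implicit Defensive.
Import Order.TTheory GRing.Theory Num.Theory.
Local Open Scope ring_scope.

(* Agents: 'I_n.  Types: 'I_p.  Type D_i = {(i,k) | k : 'I_n}, so |D_i| = n
   and the types are pairwise disjoint.  Items M = 'I_p * 'I_n. *)
Definition item (n p : nat) : finType := ('I_p * 'I_n)%type.

Definition bundle (n p : nat) : finType := {ffun 'I_p -> 'I_n}.

Definition in_bundle n p (o : item n p) (x : bundle n p) : bool := x o.1 == o.2.

(* A preference of agent j is a relation  pref j x y  meaning  x >_j y. *)
Definition strict_linear_order (T : finType) (r : rel T) : Prop :=
  irreflexive r /\ transitive r /\ (forall x y, x != y -> r x y || r y x).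

Definition upper (T : finType) (r : rel T) (x : T) : pred T :=
  fun y => r y x || (y == x).

Definition sd_dominates (R : numDomainType) (T : finType) (r : rel T)
    (pp qq : T -> R) : Prop :=
  forall x, \sum_(y | upper r x y) qq y <= \sum_(y | upper r x y) pp y.

Definition alloc (R : Type) (n p : nat) := {ffun 'I_n -> {ffun bundle n p -> R}}.

Definition sd_envy_free (R : numDomainType) n p (pref : 'I_n -> rel (bundle n p))
    (P : alloc R n p) : Prop :=
  forall j k : 'I_n, sd_dominates (pref j) (P j) (P k).

(* ---------- Multi-type probabilistic serial (MPS) ----------
   The continuous eating process is piecewise constant: between two
   exhaustion events every agent keeps eating the same bundle.  We simulate
   it phase by phase. *)
Section MPS.
Variables (R : realFieldType) (n p : nat) (pref : 'I_n -> rel (bundle n p)).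

Definition supply := {ffun item n p -> R}.

Definition available (s : supply) (x : bundle n p) : bool :=
  [forall i, 0 < s (i, x i)].

Definition eats (s : supply) (j : 'I_n) : option (bundle n p) :=
  [pick x | available s x &&
     [forall y, (available s y && (y != x)) ==> pref j x y]].

Definition rate (s : supply) (o : item n p) : nat :=
  #|[set j | if eats s j is Some x then in_bundle o x else false]|.

(* length of the current phase: time until the first item being eaten is
   exhausted.  (Remaining supplies are <= 1 and rates >= 1, so the neutral
   value 1 never cuts a phase short; it is only used when nobody eats.) *)
Definition phase_length (s : supply) : R :=
  \big[Num.min/1]_(o | (0 < rate s o)%N) (s o / (rate s o)%:R).

Definition mps_step (st : supply * alloc R n p) : supply * alloc R n p :=
  let s := st.1 in let P := st.2 in let t := phase_length s in
  ([ffun o => s o - t * (rate s o)%:R],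
   [ffun j => [ffun x => P j x + (if eats s j == Some x then t else 0)]]).

Definition mps_init : supply * alloc R n p :=
  ([ffun _ => 1], [ffun _ => [ffun _ => 0]]).

(* Each phase exhausts at least one item, so |M| = n * p phases suffice;
   afterwards all items are exhausted and further steps change nothing. *)
Definition MPS : alloc R n p := (iter (n * p) mps_step mps_init).2.

End MPS.

From mathcomp Require Import all_boot all_order all_algebra.
Set Implicit Arguments. Unset Strict Implicit. Unset Printing Implicit Defensive.
Import Order.TTheory GRing.Theory Num.Theory.
Local Open Scope ring_scope.

(* The simulated eating process runs in phases; in each phase every agent
   eats her most preferred available bundle for the same nonnegative time t.
   Fix agents j and k and a bundle x.  Whenever k eats a bundle y in the
   upper contour set U(>_j, x), j also eats a bundle in U(>_j, x): y is still
   available, so j's favourite available bundle z is y itself or z >_j y.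
   Hence in every phase the mass j gains on U(>_j, x) is at least the mass k
   gains there, and the inequality defining sd-dominance of row j over row k
   is preserved by each step; since it holds with equality for the zero
   matrix, it holds after all n * p steps. *)

Lemma strict_linear_order_max (T : finType) (r : rel T) (A : pred T) (a : T) :
  strict_linear_order r -> A a ->
  exists2 z, A z & forall y, A y -> y != z -> r z y.
Proof.
move=> [r_irr [r_trans r_total]] Aa.
pose above z := #|[pred w | A w && r w z]|.
have [z Az z_min] := arg_minnP above Aa.
exists z => // y Ay /r_total /orP[r_yz|//]; exfalso.
have above_lt : (above y < above z)%N.
  apply/proper_card/properP; split.
    by apply/subsetP => w; rewrite !inE => /andP[-> r_wy]; exact: r_trans r_wy r_yz.
  by exists y; rewrite !inE ?Ay ?r_yz ?r_irr.
by rewrite ltnNge z_min in above_lt.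
Qed.

Lemma sum_point_mass (V : nmodType) (T : finType) (P : pred T)
    (e : option T) (t : V) :
  \sum_(y | P y) (if e == Some y then t else 0) =
  if e is Some y0 then (if P y0 then t else 0) else 0.
Proof.
case: e => [y0|]; last by rewrite big1.
case: ifP => P_y0.
  rewrite (bigD1 y0) //= eqxx big1 ?addr0 // => y /andP[_ y_neq].
  by case: eqP => // -[y0_y]; rewrite y0_y eqxx in y_neq.
by rewrite big1 // => y P_y; case: eqP => // -[y0_y]; rewrite y0_y P_y in P_y0.
Qed.

Section MPSPhase.
Variables (R : realFieldType) (n p : nat) (pref : 'I_n -> rel (bundle n p)).

Lemma eatsP (s : supply R n p) j z : eats pref s j = Some z ->
  available s z /\ forall y, available s y -> y != z -> pref j z y.
Proof.
rewrite /eats; case: pickP => // x /andP[x_av /forallP x_top] [<-].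
by split=> // y y_av y_neq; have := x_top y; rewrite y_av y_neq.
Qed.

Lemma eats_some (s : supply R n p) j y :
  strict_linear_order (pref j) -> available s y ->
  exists z, eats pref s j = Some z.
Proof.
move=> lin_j y_av; rewrite /eats; case: pickP => [x _|none]; first by exists x.
have [z z_av z_top] := strict_linear_order_max lin_j y_av.
have := none z; rewrite z_av /=; move/negP; case; apply/forallP => w.
by apply/implyP => /andP[w_av w_neq]; exact: z_top.
Qed.

Lemma rate_supply (s : supply R n p) o : (0 < rate pref s o)%N -> 0 < s o.
Proof.
rewrite /rate card_gt0 => /set0Pn[j]; rewrite inE.
case eats_j: (eats pref s j) => [x|] // o_in_x.
have [/forallP x_av _] := eatsP eats_j; have := x_av o.1.
by move: o_in_x; rewrite /in_bundle => /eqP ->; case: o.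
Qed.

Lemma phase_length_ge0 (s : supply R n p) : 0 <= phase_length pref s.
Proof.
rewrite /phase_length; elim/big_rec: _ => [|o t rate_o t_ge0]; first exact: ler01.
by rewrite le_min t_ge0 andbT divr_ge0 //; exact/ltW/rate_supply.
Qed.

(* If k eats a bundle of U(>_j, x), so does j: j's favourite available
   bundle is at least as good for j as the (available) bundle k eats. *)
Lemma eats_upper (s : supply R n p) j k x y :
  strict_linear_order (pref j) ->
  eats pref s k = Some y -> upper (pref j) x y ->
  exists2 z, eats pref s j = Some z & upper (pref j) x z.
Proof.
move=> lin_j eats_k y_up; have [y_av _] := eatsP eats_k.
have [z eats_j] := eats_some lin_j y_av; exists z => //.
have [_ z_top] := eatsP eats_j; have [_ [r_trans _]] := lin_j.
have [<-|y_neq] := eqVneq y z; first by [].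
have r_zy := z_top y y_av y_neq.
move: y_up; rewrite /upper => /orP[r_yx|/eqP y_x]; last by rewrite -y_x r_zy.
by rewrite (r_trans _ _ _ r_zy r_yx).
Qed.

Lemma mps_step_sd (st : supply R n p * alloc R n p) j k x :
  strict_linear_order (pref j) ->
  \sum_(y | upper (pref j) x y) st.2 k y <= \sum_(y | upper (pref j) x y) st.2 j y ->
  \sum_(y | upper (pref j) x y) (mps_step pref st).2 k y <=
  \sum_(y | upper (pref j) x y) (mps_step pref st).2 j y.
Proof.
move=> lin_j dom; set t := phase_length pref st.1.
have row_step i : \sum_(y | upper (pref j) x y) (mps_step pref st).2 i y =
    \sum_(y | upper (pref j) x y) st.2 i y +
    \sum_(y | upper (pref j) x y) (if eats pref st.1 i == Some y then t else 0).
  by rewrite -big_split; apply: eq_bigr => y _; rewrite !ffunE.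
rewrite !row_step lerD // !sum_point_mass.
have gain_j_ge0 : 0 <= (if eats pref st.1 j is Some z then
    (if upper (pref j) x z then t else 0) else 0).
  by case: (eats pref st.1 j) => [z|//]; case: ifP => // _; exact: phase_length_ge0.
case eats_k: (eats pref st.1 k) => [y|//]; case: ifP => [y_up|//].
by have [z -> ->] := eats_upper lin_j eats_k y_up.
Qed.

End MPSPhase.

Theorem proposition2 (R : realFieldType) (n p : nat)
    (pref : 'I_n -> rel (bundle n p)) :
  (forall j, strict_linear_order (pref j)) ->
  sd_envy_free pref (MPS R pref).
Proof.
move=> lin j k x; rewrite /MPS.
elim: (n * p)%N => [|m IH]; first by rewrite /= !big1 // => y _; rewrite !ffunE.
by rewrite iterS; exact: mps_step_sd.
Qed.
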